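(* Fix probabilities $\{\pi_k\}_{k\ge1}$ with $\pi_k=\Pr(Q=k\mid Q\ge1)\ge0$. Then the function $$L(R)=\sum_{k=2}^{\infty}\pi_k\left[1-\frac{R^k-(R-1)^k}{k\,R^{k-1}}\right]$$ decreases monotonically with increasing number of RA preambles $R\ge1$.
   Context: $Q$ is the random number of user terminals transmitting an RA preamble in a frame, and $R$ is the number of allowed RA preambles; $L(R)$ is the collision-based lower bound on the timing error probability. *)

From Stdlib Require Import Reals.
From Coquelicot Require Import Coquelicot.
Open Scope R_scope.

Definition Lterm (R : nat) (k : nat) : Rdefinitions.R :=
  1 - ((INR R) ^ k - (INR R - 1) ^ k) / (INR k * (INR R) ^ (k - 1)).

Definition L (pi : nat -> Rdefinitions.R) (R : nat) : Rdefinitions.R :=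
  Series (fun n => pi (n + 2)%nat * Lterm R (n + 2)).

(* With x = 1 - 1/R one has R^k - (R-1)^k = R^k (1 - x^k) = R^(k-1) (1 + x + ... + x^(k-1)),
   so the k-th term of L(R) is 1 minus the mean of 1, x, ..., x^(k-1).  That mean lies in [0, 1]
   and grows with x, hence with R; weighting by pi_k >= 0 and comparing the series termwise gives
   the monotonicity, convergence being dominated by the summable pi_k. *)

From Stdlib Require Import Reals Lra Lia.
From Coquelicot Require Import Coquelicot.
Open Scope R_scope.

Definition pow_mean (x : R) (k : nat) : R :=
  sum_f_R0 (fun i => x ^ i) k / INR (S k).

Lemma pow_mean_bounds (x : R) (k : nat) : 0 <= x <= 1 -> 0 <= pow_mean x k <= 1.
Proof.
  intros Hx. unfold pow_mean, Rdiv.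
  assert (Hk : 0 < INR (S k)) by apply lt_0_INR, Nat.lt_0_succ.
  assert (Hsum_nonneg : 0 <= sum_f_R0 (fun i => x ^ i) k)
    by (apply cond_pos_sum; intros; apply pow_le; lra).
  assert (Hsum_le : sum_f_R0 (fun i => x ^ i) k <= INR (S k)).
  { rewrite <- (Rmult_1_l (INR (S k))), <- sum_cte.
    apply sum_Rle; intros i _. rewrite <- (pow1 i). apply pow_incr. lra. }
  split.
  - apply Rmult_le_pos; [lra | left; apply Rinv_0_lt_compat; lra].
  - rewrite <- (Rinv_r (INR (S k))) by lra.
    apply Rmult_le_compat_r; [left; apply Rinv_0_lt_compat |]; lra.
Qed.

Lemma pow_mean_le (x y : R) (k : nat) : 0 <= x <= y -> pow_mean x k <= pow_mean y k.
Proof.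
  intros Hxy. unfold pow_mean, Rdiv.
  apply Rmult_le_compat_r.
  - left. apply Rinv_0_lt_compat, lt_0_INR, Nat.lt_0_succ.
  - apply sum_Rle. intros i _. apply pow_incr. lra.
Qed.

Lemma Lterm_S (n k : nat) : (1 <= n)%nat ->
  Lterm n (S k) = 1 - pow_mean (1 - / INR n) k.
Proof.
  intros Hn.
  assert (Hpos : 0 < INR n) by (apply lt_0_INR; lia).
  set (x := 1 - / INR n).
  assert (Hshift : INR n - 1 = x * INR n) by (unfold x; field; lra).
  assert (Hgeom : sum_f_R0 (fun i => x ^ i) k = INR n * (1 - x ^ S k)).
  { assert (Hratio : x - 1 = - / INR n) by (unfold x; ring).
    pose proof (GP_finite x k) as Hgp.
    rewrite Hratio, Nat.add_1_r in Hgp.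
    apply (Rmult_eq_reg_r (- / INR n)).
    - rewrite Hgp. field. lra.
    - apply Ropp_neq_0_compat, Rinv_neq_0_compat. lra. }
  unfold Lterm, pow_mean.
  replace (S k - 1)%nat with k by lia.
  rewrite Hshift, Rpow_mult_distr, Hgeom.
  assert (0 < INR (S k)) by apply lt_0_INR, Nat.lt_0_succ.
  assert (0 < INR n ^ k) by (apply pow_lt; lra).
  simpl pow. field. lra.
Qed.

Lemma one_minus_inv_INR_bounds (n : nat) : (1 <= n)%nat -> 0 <= 1 - / INR n <= 1.
Proof.
  intros Hn. assert (H1 : 1 <= INR n) by (apply (le_INR 1); lia).
  assert (0 < / INR n) by (apply Rinv_0_lt_compat; lra).
  assert (/ INR n <= 1) by (rewrite <- Rinv_1; apply Rinv_le_contravar; lra).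
  lra.
Qed.

Lemma one_minus_inv_INR_le (m n : nat) : (1 <= m)%nat -> (m <= n)%nat ->
  1 - / INR m <= 1 - / INR n.
Proof.
  intros Hm Hmn. assert (1 <= INR m) by (apply (le_INR 1); lia).
  assert (INR m <= INR n) by (apply le_INR; lia).
  assert (/ INR n <= / INR m) by (apply Rinv_le_contravar; lra).
  lra.
Qed.

Lemma Lterm_S_bounds (n k : nat) : (1 <= n)%nat -> 0 <= Lterm n (S k) <= 1.
Proof.
  intros Hn. rewrite Lterm_S by exact Hn.
  pose proof (pow_mean_bounds _ k (one_minus_inv_INR_bounds n Hn)). lra.
Qed.

Lemma Lterm_S_le (m n k : nat) : (1 <= m)%nat -> (m <= n)%nat ->
  Lterm n (S k) <= Lterm m (S k).
Proof.
  intros Hm Hmn. rewrite !Lterm_S by lia.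
  pose proof (one_minus_inv_INR_bounds m Hm).
  pose proof (one_minus_inv_INR_le m n Hm Hmn).
  pose proof (pow_mean_le (1 - / INR m) (1 - / INR n) k ltac:(lra)). lra.
Qed.

Lemma Series_weighted_le (a b c : nat -> R) :
  ex_series a -> (forall n, 0 <= a n) -> (forall n, 0 <= b n <= c n /\ c n <= 1) ->
  Series (fun n => a n * b n) <= Series (fun n => a n * c n).
Proof.
  intros Ha Ha_nonneg Hbc.
  apply Series_le.
  - intros n. destruct (Hbc n) as [[Hb Hle] _]. pose proof (Ha_nonneg n).
    split; [apply Rmult_le_pos | apply Rmult_le_compat_l]; lra.
  - apply (@ex_series_le R_AbsRing R_CompleteNormedModule _ a); [| exact Ha].
    intros n. destruct (Hbc n) as [[Hb Hle] Hc]. pose proof (Ha_nonneg n).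
    change (Rabs (a n * c n) <= a n).
    rewrite Rabs_pos_eq by (apply Rmult_le_pos; lra).
    rewrite <- (Rmult_1_r (a n)) at 2. apply Rmult_le_compat_l; lra.
Qed.

Theorem corollary1 (pi : nat -> R)
  (hpi_nonneg : forall k : nat, (1 <= k)%nat -> 0 <= pi k)
  (hpi_sum : is_series (fun n => pi (S n)) 1) :
  forall R1 R2 : nat, (1 <= R1)%nat -> (R1 <= R2)%nat -> L pi R2 <= L pi R1.
Proof.
  intros R1 R2 H1 H12. unfold L.
  apply Series_weighted_le.
  - assert (Hex : ex_series (fun n => pi (S n))) by (exists 1; exact hpi_sum).
    apply (ex_series_incr_1 (fun n => pi (S n))) in Hex.
    apply (ex_series_ext (fun n => pi (S (S n)))); [| exact Hex].
    intros n. f_equal. lia.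
  - intros n. apply hpi_nonneg. lia.
  - intros n. replace (n + 2)%nat with (S (S n)) by lia.
    split; [split |].
    + apply Lterm_S_bounds. lia.
    + apply Lterm_S_le; assumption.
    + apply Lterm_S_bounds. exact H1.
Qed.
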